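(* Let $\alpha>0$ and let $Y,y\in\mathbb{R}$ satisfy $-Y\leq y\leq Y$. Define $g_{\alpha,Y}:\mathbb{R}\to\mathbb{R}$ by $$g_{\alpha,Y}(z)=\operatorname{sign}(z)\left(Y\sqrt{\alpha |z|+1}-Y\right),$$ that is, $g_{\alpha,Y}(z)=Y\sqrt{\alpha z+1}-Y$ for $z\geq 0$ and $g_{\alpha,Y}(z)=-Y\sqrt{-\alpha z+1}+Y$ for $z<0$. Then the function $z\mapsto l_y(g_{\alpha,Y}(z))=(g_{\alpha,Y}(z)-y)^2$ is convex on $\mathbb{R}$.
   Context: Here $l_y(\hat y)=(\hat y-y)^2$ denotes the square (L2) loss of a prediction $\hat y$ against the target $y$, and $\operatorname{sign}(z)$ is $1$ for $z>0$, $-1$ for $z<0$, and $0$ for $z=0$. *)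

From Stdlib Require Import Reals Lra.
Open Scope R_scope.

Definition sign (z : R) : R :=
  match Rlt_dec 0 z with
  | left _ => 1
  | right _ => match Rlt_dec z 0 with left _ => -1 | right _ => 0 end
  end.

Definition sq_loss (y yhat : R) : R := (yhat - y) ^ 2.

Definition g_fun (alpha Y z : R) : R :=
  sign z * (Y * sqrt (alpha * Rabs z + 1) - Y).

Definition convex_on_R (f : R -> R) : Prop :=
  forall x1 x2 t : R, 0 <= t <= 1 ->
    f (t * x1 + (1 - t) * x2) <= t * f x1 + (1 - t) * f x2.

(** Write [k(w) = alpha w / 2 + 1 - sqrt (alpha w + 1)]. Since [sqrt (alpha w + 1) - 1 = alpha w / 2 - k(w)],
    expanding the square on each half-line gives
    [(g(z) - y)^2 = y^2 - alpha Y y z + 2 Y (Y + y) k(z+) + 2 Y (Y - y) k(z-)].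
    The function [k] is convex (as [sqrt] is concave) and nondecreasing on [[0, +oo)], so [k(z+)] and [k(z-)]
    are convex; the hypothesis [-Y <= y <= Y] makes both coefficients nonnegative. *)
From Stdlib Require Import Reals.
From Stdlib Require Import Lra Psatz.
Open Scope R_scope.

Lemma convex_on_R_ext (f g : R -> R) :
  (forall z, f z = g z) -> convex_on_R f -> convex_on_R g.
Proof.
  intros Efg Hf x1 x2 t Ht. rewrite <- !Efg. exact (Hf x1 x2 t Ht).
Qed.

Lemma convex_on_R_affine (a b : R) : convex_on_R (fun z => a + b * z).
Proof. intros x1 x2 t Ht. lra. Qed.

Lemma convex_on_R_add (f g : R -> R) :
  convex_on_R f -> convex_on_R g -> convex_on_R (fun z => f z + g z).
Proof.
  intros Hf Hg x1 x2 t Ht.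
  pose proof (Hf x1 x2 t Ht). pose proof (Hg x1 x2 t Ht). lra.
Qed.

Lemma convex_on_R_scale (c : R) (f : R -> R) :
  0 <= c -> convex_on_R f -> convex_on_R (fun z => c * f z).
Proof.
  intros Hc Hf x1 x2 t Ht.
  pose proof (Rmult_le_compat_l c _ _ Hc (Hf x1 x2 t Ht)). lra.
Qed.

Lemma convex_on_R_comp_opp (f : R -> R) :
  convex_on_R f -> convex_on_R (fun z => f (- z)).
Proof.
  intros Hf x1 x2 t Ht.
  replace (- (t * x1 + (1 - t) * x2)) with (t * - x1 + (1 - t) * - x2) by ring.
  exact (Hf (- x1) (- x2) t Ht).
Qed.

Definition convex_on_nonneg (f : R -> R) : Prop :=
  forall w1 w2 t : R, 0 <= w1 -> 0 <= w2 -> 0 <= t <= 1 ->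
    f (t * w1 + (1 - t) * w2) <= t * f w1 + (1 - t) * f w2.

Definition nondecreasing_on_nonneg (f : R -> R) : Prop :=
  forall w1 w2 : R, 0 <= w1 -> w1 <= w2 -> f w1 <= f w2.

(* The positive part is convex and nonnegative, and composing with [f] keeps convexity
   because [f] is nondecreasing there. *)
Lemma convex_on_R_comp_pos_part (f : R -> R) :
  nondecreasing_on_nonneg f -> convex_on_nonneg f ->
  convex_on_R (fun z => f (Rmax z 0)).
Proof.
  intros Hmono Hconv x1 x2 t Ht.
  assert (Hsub : Rmax (t * x1 + (1 - t) * x2) 0 <= t * Rmax x1 0 + (1 - t) * Rmax x2 0).
  { unfold Rmax; repeat destruct Rle_dec; nra. }
  apply Rle_trans with (f (t * Rmax x1 0 + (1 - t) * Rmax x2 0)).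
  - apply Hmono; [apply Rmax_r | exact Hsub].
  - apply Hconv; [apply Rmax_r | apply Rmax_r | exact Ht].
Qed.

Lemma sqrt_concave (a b t : R) : 0 <= a -> 0 <= b -> 0 <= t <= 1 ->
  t * sqrt a + (1 - t) * sqrt b <= sqrt (t * a + (1 - t) * b).
Proof.
  intros Ha Hb Ht.
  pose proof (sqrt_pos a). pose proof (sqrt_pos b).
  pose proof (sqrt_sqrt a Ha) as Ea. pose proof (sqrt_sqrt b Hb) as Eb.
  set (sa := sqrt a) in *. set (sb := sqrt b) in *.
  rewrite <- (sqrt_pow2 (t * sa + (1 - t) * sb)) by nra.
  apply sqrt_le_1_alt.
  rewrite <- Ea, <- Eb.
  assert (0 <= t * (1 - t) * (sa - sb) ^ 2) by (apply Rmult_le_pos; [nra | apply pow2_ge_0]).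
  nra.
Qed.

Definition sqrt_gap (alpha w : R) : R := alpha * w / 2 + 1 - sqrt (alpha * w + 1).

Lemma sqrt_gap_0 (alpha : R) : sqrt_gap alpha 0 = 0.
Proof.
  unfold sqrt_gap. rewrite Rmult_0_r, Rplus_0_l, sqrt_1. field.
Qed.

Lemma sqrt_gap_convex (alpha : R) : 0 <= alpha -> convex_on_nonneg (sqrt_gap alpha).
Proof.
  intros Ha w1 w2 t H1 H2 Ht. unfold sqrt_gap.
  pose proof (sqrt_concave (alpha * w1 + 1) (alpha * w2 + 1) t ltac:(nra) ltac:(nra) Ht) as Hc.
  replace (t * (alpha * w1 + 1) + (1 - t) * (alpha * w2 + 1))
    with (alpha * (t * w1 + (1 - t) * w2) + 1) in Hc by ring.
  lra.
Qed.

Lemma sqrt_gap_nondecreasing (alpha : R) :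
  0 <= alpha -> nondecreasing_on_nonneg (sqrt_gap alpha).
Proof.
  intros Ha w1 w2 H1 H12. unfold sqrt_gap.
  pose proof (sqrt_sqrt (alpha * w1 + 1) ltac:(nra)) as E1.
  pose proof (sqrt_sqrt (alpha * w2 + 1) ltac:(nra)) as E2.
  assert (G1 : 1 <= sqrt (alpha * w1 + 1)).
  { rewrite <- sqrt_1 at 1. apply sqrt_le_1_alt. nra. }
  assert (G12 : sqrt (alpha * w1 + 1) <= sqrt (alpha * w2 + 1)).
  { apply sqrt_le_1_alt. nra. }
  set (s1 := sqrt (alpha * w1 + 1)) in *. set (s2 := sqrt (alpha * w2 + 1)) in *.
  (* [sqrt_gap alpha w = (sqrt (alpha w + 1) - 1)^2 / 2] *)
  assert (0 <= (s2 - s1) * (s2 + s1 - 2)) by nra.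
  nra.
Qed.

Lemma sq_sqrt_shift (alpha Y y w : R) : 0 <= alpha * w + 1 ->
  (Y * (sqrt (alpha * w + 1) - 1) - y) ^ 2
  = y ^ 2 - alpha * Y * y * w + 2 * Y * (Y + y) * sqrt_gap alpha w.
Proof.
  intros Hw. unfold sqrt_gap.
  pose proof (sqrt_sqrt (alpha * w + 1) Hw) as E.
  set (s := sqrt (alpha * w + 1)) in *.
  replace (alpha * Y * y * w) with (Y * y * (alpha * w)) by ring.
  replace (alpha * w) with (s * s - 1) by lra. field.
Qed.

Lemma sq_loss_g_fun_decomp (alpha Y y z : R) : 0 <= alpha ->
  sq_loss y (g_fun alpha Y z)
  = y ^ 2 - alpha * Y * y * z
    + 2 * Y * (Y + y) * sqrt_gap alpha (Rmax z 0)
    + 2 * Y * (Y - y) * sqrt_gap alpha (Rmax (- z) 0).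
Proof.
  intros Ha. unfold sq_loss, g_fun, sign.
  destruct (Rlt_dec 0 z) as [Hpos | Hnpos].
  - rewrite Rabs_right, Rmax_left, Rmax_right, sqrt_gap_0 by lra.
    replace (1 * (Y * sqrt (alpha * z + 1) - Y) - y)
      with (Y * (sqrt (alpha * z + 1) - 1) - y) by ring.
    rewrite sq_sqrt_shift by nra. ring.
  - destruct (Rlt_dec z 0) as [Hneg | Hnneg].
    + rewrite Rabs_left, Rmax_right, Rmax_left, sqrt_gap_0 by lra.
      replace ((-1 * (Y * sqrt (alpha * - z + 1) - Y) - y) ^ 2)
        with ((Y * (sqrt (alpha * - z + 1) - 1) - - y) ^ 2) by ring.
      rewrite sq_sqrt_shift by nra. ring.
    + replace z with 0 by lra.
      rewrite Ropp_0, Rmax_left, sqrt_gap_0 by lra. ring.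
Qed.

Theorem mainTheorem1 (alpha Y y : R) (Halpha : 0 < alpha)
  (Hy : - Y <= y <= Y) :
  convex_on_R (fun z => sq_loss y (g_fun alpha Y z)).
Proof.
  assert (Ha : 0 <= alpha) by lra.
  pose proof (convex_on_R_comp_pos_part (sqrt_gap alpha)
    (sqrt_gap_nondecreasing alpha Ha) (sqrt_gap_convex alpha Ha)) as Hgap.
  apply convex_on_R_ext with (fun z =>
    (y ^ 2 + - (alpha * Y * y) * z)
    + (2 * Y * (Y + y) * sqrt_gap alpha (Rmax z 0)
       + 2 * Y * (Y - y) * sqrt_gap alpha (Rmax (- z) 0))).
  - intros z. rewrite sq_loss_g_fun_decomp by exact Ha. ring.
  - apply convex_on_R_add; [apply convex_on_R_affine | apply convex_on_R_add].
    + apply convex_on_R_scale; [nra | exact Hgap].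
    + apply convex_on_R_scale; [nra | exact (convex_on_R_comp_opp _ Hgap)].
Qed.
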